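(* Let $\gamma$ be a $q$-curve with winding number $k$. Then: (a) if $q>1$, then $k\neq0$; (b) $q$ and $k$ are relatively prime; (c) if $\zeta$ is another $q$-curve (same $q$) whose point set does not intersect that of $\gamma$, then $\zeta$ has the same winding number $k$.
   Context: $\mathbb{T}^1=\mathbb{R}/\mathbb{Z}$, $\mathbb{T}^2=\mathbb{T}^1\times\mathbb{T}^1$. Let $q\in\mathbb{N}$. A $q$-curve is given by a continuous function $\hat\gamma:\mathbb{R}\to\mathbb{R}$ such that for some $k\in\mathbb{Z}$: $\hat\gamma(\hat\theta+q)-\hat\gamma(\hat\theta)=k$ for all $\hat\theta\in\mathbb{R}$, and $\hat\gamma(\hat\theta+l)-\hat\gamma(\hat\theta)\notin\mathbb{Z}$ for all $\hat\theta\in\mathbb{R}$ and all $1\le l<q$. The $q$-curve itself is the $q$-valued graph $\gamma=(\gamma_1,\dots,\gamma_q)$ on $\mathbb{T}^1$, $\gamma_i(\theta)=\hat\gamma(\hat\theta+i-1)\bmod1$ where $\hat\theta\in[0,1)$ represents $\theta$; equivalently its point set is $\Gamma=\{(\hat\theta\bmod1,\hat\gamma(\hat\theta)\bmod1):\hat\theta\in\mathbb{R}\}\subseteq\mathbb{T}^2$. Any such $\hat\gamma$ projecting onto $\Gamma$ is called a lift of $\gamma$, and the integer $k$ (independent of the lift) is the winding number of $\gamma$. *)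

From Stdlib Require Import Reals ZArith.
Open Scope R_scope.

Definition is_int (x : R) : Prop := exists m : Z, x = IZR m.

Definition is_qcurve_lift (q : nat) (k : Z) (g : R -> R) : Prop :=
  (1 <= q)%nat /\
  continuity g /\
  (forall t : R, g (t + INR q) - g t = IZR k) /\
  (forall (t : R) (l : nat), (1 <= l)%nat -> (l < q)%nat -> ~ is_int (g (t + INR l) - g t)).

(* The point sets {(t mod 1, g t mod 1)} and {(s mod 1, z s mod 1)} in T^2
   are disjoint: no t, s with t ≡ s and g t ≡ z s (mod 1). *)
Definition point_sets_disjoint (g z : R -> R) : Prop :=
  forall t s : R, ~ (is_int (t - s) /\ is_int (g t - z s)).

(** A continuous real function that never takes an integer value stays inside
    one interval (m, m+1), by the intermediate value theorem.  Applied to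
    t |-> g(t + l) - g t with q = l d and d = gcd(q, k) >= 2, telescoping d such
    increments gives k = g(q) - g(0) strictly between d m and d (m + 1), which is
    impossible since d divides k; hence q and k are coprime, and in particular
    k <> 0 when q > 1.  Applied to the difference g - z of lifts of disjoint
    q-curves, it shows that k - k' = (g - z)(q) - (g - z)(0) has absolute value
    below 1, hence vanishes. *)

From Stdlib Require Import Reals ZArith Lra Lia Psatz.
Open Scope R_scope.

Lemma continuity_stays_below (f : R -> R) (c a b : R) :
  continuity f -> (forall x, f x <> c) -> f a < c -> f b < c.
Proof.
  intros Hf Hc Ha.
  destruct (Rlt_le_dec (f b) c) as [Hb | Hb]; [exact Hb | exfalso].
  assert (Hb' : c < f b) by (destruct Hb as [Hb | Hb]; [exact Hb | now destruct (Hc b)]).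
  assert (Hconst : continuity (fun _ => c)) by now apply continuity_const.
  destruct (Rtotal_order a b) as [Hab | [Hab | Hab]].
  - destruct (IVT (fun x => f x - c) a b (continuity_minus _ _ Hf Hconst) Hab)
      as [x [_ Hx]]; cbn; [lra | lra |].
    apply (Hc x); lra.
  - subst; lra.
  - destruct (IVT (fun x => c - f x) b a (continuity_minus _ _ Hconst Hf) Hab)
      as [x [_ Hx]]; cbn; [lra | lra |].
    apply (Hc x); lra.
Qed.

Lemma continuity_stays_above (f : R -> R) (c a b : R) :
  continuity f -> (forall x, f x <> c) -> c < f a -> c < f b.
Proof.
  intros Hf Hc Ha.
  enough (- f b < - c) by lra.
  apply (continuity_stays_below (fun x => - f x) (- c) a);
    [now apply continuity_opp | intros x E; apply (Hc x); lra | lra].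
Qed.

Lemma continuity_noninteger_range (f : R -> R) :
  continuity f -> (forall x, ~ is_int (f x)) ->
  exists m : Z, forall x, IZR m < f x < IZR m + 1.
Proof.
  intros Hf Hint.
  assert (Hval : forall (n : Z) x, f x <> IZR n) by (intros n x E; apply (Hint x); now exists n).
  exists (Zfloor (f 0)).
  destruct (Zfloor_bound (f 0)) as [Hlo Hhi].
  assert (Hlo' : IZR (Zfloor (f 0)) < f 0)
    by (destruct Hlo as [Hlo | Hlo]; [exact Hlo | now destruct (Hval (Zfloor (f 0)) 0)]).
  intro x; split.
  - exact (continuity_stays_above f _ 0 x Hf (Hval _) Hlo').
  - rewrite <- plus_IZR.
    apply (continuity_stays_below f _ 0 x Hf (Hval _)); rewrite plus_IZR; exact Hhi.
Qed.

Lemma continuity_shift_difference (g : R -> R) (a : R) :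
  continuity g -> continuity (fun t => g (t + a) - g t).
Proof.
  intros Hg.
  apply continuity_minus; [intro t | exact Hg].
  apply (continuity_pt_comp (fun t => t + a) g); [| apply Hg].
  apply continuity_pt_plus;
    [apply derivable_continuous_pt, derivable_pt_id | now apply continuity_pt_const].
Qed.

Lemma increments_bounded_iter (g : R -> R) (a lo hi t : R) (m : nat) :
  (forall s, lo < g (s + a) - g s < hi) -> (1 <= m)%nat ->
  INR m * lo < g (t + INR m * a) - g t < INR m * hi.
Proof.
  intros Hstep Hm.
  destruct m as [| j]; [lia | clear Hm].
  induction j as [| j IH].
  - rewrite !Rmult_1_l; apply Hstep.
  - specialize (Hstep (t + INR (S j) * a)).
    replace (t + INR (S (S j)) * a) with (t + INR (S j) * a + a)
      by (rewrite (S_INR (S j)); ring).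
    rewrite (S_INR (S j)); lra.
Qed.

Lemma qcurve_lift_common_divisor (q : nat) (k : Z) (g : R -> R) (l d : nat) (c : Z) :
  is_qcurve_lift q k g -> q = (l * d)%nat -> k = (Z.of_nat d * c)%Z -> d = 1%nat.
Proof.
  intros [Hq [Hg [Hper Hnoint]]] Hqld Hkdc.
  destruct (Nat.eq_dec d 1) as [| Hd1]; [assumption | exfalso].
  assert (Hd : (2 <= d)%nat) by (destruct d as [| [|]]; [rewrite Nat.mul_0_r in Hqld |..]; lia).
  assert (Hl : (1 <= l < q)%nat) by nia.
  destruct (continuity_noninteger_range (fun t => g (t + INR l) - g t))
    as [m Hm]; [now apply continuity_shift_difference | intro t; apply Hnoint; lia |].
  destruct (increments_bounded_iter g (INR l) (IZR m) (IZR m + 1) 0 d Hm) as [Hlo Hhi];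
    [lia |].
  rewrite <- mult_INR, Nat.mul_comm, <- Hqld, Hper, Hkdc, INR_IZR_INZ in Hlo, Hhi.
  rewrite <- mult_IZR in Hlo; rewrite <- plus_IZR, <- mult_IZR in Hhi.
  apply lt_IZR in Hlo; apply lt_IZR in Hhi.
  assert (Hd0 : (0 < Z.of_nat d)%Z) by lia.
  apply (Z.mul_lt_mono_pos_l _ _ _ Hd0) in Hlo, Hhi; lia.
Qed.

Lemma qcurve_lift_coprime (q : nat) (k : Z) (g : R -> R) :
  is_qcurve_lift q k g -> Z.gcd (Z.of_nat q) k = 1%Z.
Proof.
  intros Hlift.
  destruct (Z.gcd_divide_l (Z.of_nat q) k) as [L HL].
  destruct (Z.gcd_divide_r (Z.of_nat q) k) as [c Hc].
  pose proof (Z.gcd_nonneg (Z.of_nat q) k) as Hd.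
  set (d := Z.gcd (Z.of_nat q) k) in *.
  assert (HL0 : (0 <= L)%Z) by (destruct Hlift; nia).
  enough (Z.to_nat d = 1%nat) by lia.
  apply (qcurve_lift_common_divisor q k g (Z.to_nat L) _ c Hlift).
  - apply Nat2Z.inj; rewrite Nat2Z.inj_mul, !Z2Nat.id; assumption.
  - rewrite Z2Nat.id; lia.
Qed.

Lemma qcurve_lift_winding_nonzero (q : nat) (k : Z) (g : R -> R) :
  is_qcurve_lift q k g -> (1 < q)%nat -> k <> 0%Z.
Proof.
  intros Hlift Hq ->.
  pose proof (qcurve_lift_coprime q 0 g Hlift) as Hgcd.
  rewrite Z.gcd_0_r in Hgcd; lia.
Qed.

Lemma disjoint_qcurve_lifts_same_winding (q : nat) (k k' : Z) (g z : R -> R) :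
  is_qcurve_lift q k g -> is_qcurve_lift q k' z -> point_sets_disjoint g z -> k' = k.
Proof.
  intros [_ [Hg [Hgper _]]] [_ [Hz [Hzper _]]] Hdisj.
  destruct (continuity_noninteger_range (fun s => g s - z s)) as [m Hm].
  - now apply continuity_minus.
  - intros s Hint; apply (Hdisj s s); split; [exists 0%Z; cbn; ring | exact Hint].
  - pose proof (Hm 0) as H0; pose proof (Hm (0 + INR q)) as Hq.
    specialize (Hgper 0); specialize (Hzper 0).
    assert (Hlo : IZR (-1) < IZR (k - k')) by (rewrite minus_IZR; lra).
    assert (Hhi : IZR (k - k') < IZR 1) by (rewrite minus_IZR; lra).
    apply lt_IZR in Hlo; apply lt_IZR in Hhi; lia.
Qed.

Theorem mainTheorem2 (q : nat) (k : Z) (g : R -> R) :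
  is_qcurve_lift q k g ->
  ((1 < q)%nat -> k <> 0%Z) /\
  Z.gcd (Z.of_nat q) k = 1%Z /\
  (forall (k' : Z) (z : R -> R),
      is_qcurve_lift q k' z -> point_sets_disjoint g z -> k' = k).
Proof.
  intros Hlift; split; [| split].
  - exact (qcurve_lift_winding_nonzero q k g Hlift).
  - exact (qcurve_lift_coprime q k g Hlift).
  - intros k' z Hz Hdisj; exact (disjoint_qcurve_lifts_same_winding q k k' g z Hlift Hz Hdisj).
Qed.
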